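(* Let $\alpha\in\mathbb{N}_0$ and $M\ge0$. (a) For all $y\in C^{(2\alpha+4)}(0,\infty)$ and $x>0$, $$x^2(x^{-1}D_x)^{2\alpha+4}\big[x^{2\alpha+2}y(x)\big]=\Big[D_x^2+\frac{2\alpha+1}{x}D_x-\frac{4\alpha+4}{x^2}\Big]^{\alpha+2}y(x).$$ (b) For every $\lambda\ge0$ the Bessel-type function $J_\lambda^{\alpha,M}$ satisfies, for $x>0$, $$\Big\{\big[\widetilde L_{2,x}^{\alpha}+\lambda^2\big]+\frac{M}{2^{2\alpha+2}(\alpha+2)!}\big[\widetilde L_{2\alpha+4,x}^{\alpha}+\lambda^{2\alpha+4}\big]\Big\}J_\lambda^{\alpha,M}(x)=0.$$ (c) For every $\lambda\ge0$, $\big[\widetilde L_{2\alpha+4,x}^{\alpha}+\lambda^{2\alpha+4}\big]K_\lambda^{\alpha}(x)=0$ for $x>0$.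
   Context: $\widetilde L_{2,x}^{\alpha}y(x)=x^{-2\alpha-1}D_x[x^{2\alpha+1}D_xy(x)]=y''+\frac{2\alpha+1}{x}y'$ and $\widetilde L_{2\alpha+4,x}^{\alpha}y(x)=(-1)^{\alpha+1}x^2(x^{-1}D_x)^{2\alpha+4}[x^{2\alpha+2}y(x)]$, where $(x^{-1}D_x)^k$ is the $k$-fold application of $y\mapsto x^{-1}y'$. For $\gamma>-1$, $\lambda\ge0$: $J_\lambda^{\gamma}(x)={}_0F_1(-;\gamma+1;-\tfrac14(\lambda x)^2)=2^{\gamma}\Gamma(\gamma+1)(\lambda x)^{-\gamma}J_\gamma(\lambda x)$ (normalized Bessel function). The Bessel-type functions are $J_\lambda^{\alpha,M}(x)=J_\lambda^{\alpha}(x)+M K_\lambda^{\alpha}(x)$ with $K_\lambda^{\alpha}(x)=-k_\lambda^{\alpha}x^2J_\lambda^{\alpha+2}(x)$, $k_\lambda^{\alpha}=\frac{(\lambda/2)^{2\alpha+4}}{(\alpha+1)(\alpha+2)!}$. *)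

From Stdlib Require Import Reals Lra ClassicalEpsilon Factorial.
Open Scope R_scope.

Definition D (f : R -> R) : R -> R :=
  fun x => epsilon (inhabits 0) (fun l => derivable_pt_lim f x l).

Definition Rlim (u : nat -> R) : R :=
  epsilon (inhabits 0) (fun l => Un_cv u l).

Definition iterop (k : nat) (T : (R -> R) -> (R -> R)) (f : R -> R) : R -> R :=
  Nat.iter k T f.

Definition Dk (k : nat) (f : R -> R) : R -> R := iterop k D f.

Definition Cn_pos (n : nat) (y : R -> R) : Prop :=
  (forall k x, (k < n)%nat -> 0 < x -> derivable_pt_lim (Dk k y) x (Dk (S k) y x)) /\
  (forall x, 0 < x -> continuity_pt (Dk n y) x).

Definition xinvD (f : R -> R) : R -> R := fun x => / x * D f x.

Fixpoint poch (a : R) (k : nat) : R :=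
  match k with O => 1 | S k' => poch a k' * (a + INR k') end.

(* Normalized Bessel function J_lambda^gamma(x) = 0F1(-; gamma+1; -(lambda x)^2/4) *)
Definition Jn (gamma lambda x : R) : R :=
  Rlim (fun N => sum_f_R0 (fun k =>
      (-1) ^ k * (lambda * x / 2) ^ (2 * k) / (INR (fact k) * poch (gamma + 1) k)) N).

Definition kcoef (alpha : nat) (lambda : R) : R :=
  (lambda / 2) ^ (2 * alpha + 4) / ((INR alpha + 1) * INR (fact (alpha + 2))).

Definition Kfun (alpha : nat) (lambda x : R) : R :=
  - kcoef alpha lambda * x ^ 2 * Jn (INR alpha + 2) lambda x.

Definition JM (alpha : nat) (M lambda x : R) : R :=
  Jn (INR alpha) lambda x + M * Kfun alpha lambda x.

Definition L2 (alpha : nat) (y : R -> R) : R -> R :=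
  fun x => / x ^ (2 * alpha + 1) * D (fun t => t ^ (2 * alpha + 1) * D y t) x.

Definition L2a4 (alpha : nat) (y : R -> R) : R -> R :=
  fun x => (-1) ^ (alpha + 1) * x ^ 2 *
           iterop (2 * alpha + 4) xinvD (fun t => t ^ (2 * alpha + 2) * y t) x.

Definition Bop (alpha : nat) (f : R -> R) : R -> R :=
  fun x => D (D f) x + (2 * INR alpha + 1) / x * D f x - (4 * INR alpha + 4) / x ^ 2 * f x.

(* Part (a): on (0, oo) write [theta a = x D + a].  Then [x^(-1) D = x^(-2) theta 0],
   [theta a (x^k g) = x^k theta (a + k) g] and [Bop alpha = x^(-2) theta (-2) theta (2 alpha + 2)],
   so both sides equal [x^(-2 alpha - 4)] times the product of the commuting operators
   [theta (2 alpha + 2 - 2 j)], [j = 0 .. 2 alpha + 3], taken in two different orders.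

   Parts (b) and (c): [J^alpha] and [K^alpha] are entire power series in [x^2], on whose
   coefficients [L2] and [L2a4] act by explicit shifts.  Part (c) and the Bessel equation
   [(L2 + lambda^2) J^alpha = 0] are then coefficientwise identities, and (b) follows by
   linearity from them and the coupling identity
   [(L2 + lambda^2) K^alpha + c (L2a4 + lambda^(2 alpha + 4)) J^alpha = 0],
   with [c = 1 / (2^(2 alpha + 2) (alpha + 2)!)]. *)

From Stdlib Require Import Reals Lra Lia Factorial List Permutation.
From Stdlib Require Import ClassicalEpsilon FunctionalExtensionality PropExtensionality.
From Coquelicot Require Import Coquelicot.
Open Scope R_scope.

(** * Euler operators on (0, oo) *)

Definition eq_pos (f g : R -> R) : Prop := forall x, 0 < x -> f x = g x.

Lemma eq_pos_refl f : eq_pos f f.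
Proof. now intros x _. Qed.

Lemma eq_pos_sym f g : eq_pos f g -> eq_pos g f.
Proof. intros H x Hx; symmetry; auto. Qed.

Lemma eq_pos_trans f g h : eq_pos f g -> eq_pos g h -> eq_pos f h.
Proof. intros H1 H2 x Hx; rewrite H1; auto. Qed.

Lemma D_eq f x l : derivable_pt_lim f x l -> D f x = l.
Proof.
  intros H. unfold D.
  apply (uniqueness_limite f x); [|exact H].
  exact (epsilon_spec (inhabits 0) (fun l => derivable_pt_lim f x l) (ex_intro _ l H)).
Qed.

Lemma derivable_pt_lim_eq_pos f g x l : 0 < x -> eq_pos f g ->
  derivable_pt_lim f x l -> derivable_pt_lim g x l.
Proof.
  intros Hx Hfg Hf. apply is_derive_Reals. apply is_derive_Reals in Hf.
  apply (is_derive_ext_loc f); [|exact Hf].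
  exists (mkposreal x Hx). intros t Ht. apply Hfg.
  unfold ball in Ht; simpl in Ht; unfold AbsRing_ball, abs, minus, plus, opp in Ht; simpl in Ht.
  apply Rabs_def2 in Ht. lra.
Qed.

Lemma D_eq_pos f g x : 0 < x -> eq_pos f g -> D f x = D g x.
Proof.
  intros Hx Hfg. unfold D. f_equal.
  apply functional_extensionality; intro l.
  apply propositional_extensionality; split;
    apply derivable_pt_lim_eq_pos; auto using eq_pos_sym.
Qed.

Lemma D_mult f g x lf lg : derivable_pt_lim f x lf -> derivable_pt_lim g x lg ->
  D (fun t => f t * g t) x = lf * g x + f x * lg.
Proof. intros Hf Hg. now apply D_eq, derivable_pt_lim_mult. Qed.

Lemma D_ext_pos f g : eq_pos f g -> eq_pos (D f) (D g).
Proof. intros H x Hx. now apply D_eq_pos. Qed.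

Lemma iterop_ext_pos T n f g : (forall f g, eq_pos f g -> eq_pos (T f) (T g)) ->
  eq_pos f g -> eq_pos (iterop n T f) (iterop n T g).
Proof. intros HT H. induction n; simpl; auto. Qed.

Fixpoint Dsmooth (n : nat) (f : R -> R) : Prop :=
  match n with
  | O => True
  | S n => (forall x, 0 < x -> derivable_pt_lim f x (D f x)) /\ Dsmooth n (D f)
  end.

Lemma Dsmooth_ext_pos n : forall f g, eq_pos f g -> Dsmooth n f -> Dsmooth n g.
Proof.
  induction n as [|n IH]; simpl; auto. intros f g Hfg [Hf HDf]. split.
  - intros x Hx. rewrite <- (D_eq_pos f g x Hx Hfg).
    exact (derivable_pt_lim_eq_pos f g x _ Hx Hfg (Hf x Hx)).
  - exact (IH _ _ (D_ext_pos f g Hfg) HDf).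
Qed.

Lemma Dsmooth_S n : forall f, Dsmooth (S n) f -> Dsmooth n f.
Proof. induction n; simpl; intros f [H1 H2]; auto. Qed.

Lemma Dsmooth_le m n f : (m <= n)%nat -> Dsmooth n f -> Dsmooth m f.
Proof. induction 1; auto using Dsmooth_S. Qed.

Lemma Dsmooth_of_Cn_pos n y : Cn_pos n y -> Dsmooth n y.
Proof.
  intros [Hd _]. revert y Hd. induction n as [|n IH]; simpl; auto. intros y Hd. split.
  - intros x Hx. exact (Hd 0%nat x ltac:(lia) Hx).
  - apply IH. intros k x Hk Hx.
    assert (Hshift : forall j, Dk j (D y) = Dk (S j) y).
    { intro j. unfold Dk, iterop. now rewrite <- Nat.iter_succ_r. }
    rewrite !Hshift. apply Hd; auto; lia.
Qed.

Lemma Dsmooth_plus n : forall f g, Dsmooth n f -> Dsmooth n g ->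
  Dsmooth n (fun x => f x + g x).
Proof.
  induction n as [|n IH]; simpl; auto. intros f g [Hf HDf] [Hg HDg].
  assert (HD : eq_pos (fun x => D f x + D g x) (D (fun x => f x + g x))).
  { intros x Hx. symmetry. apply D_eq, derivable_pt_lim_plus; auto. }
  split.
  - intros x Hx. rewrite <- HD by auto. apply derivable_pt_lim_plus; auto.
  - exact (Dsmooth_ext_pos n _ _ HD (IH _ _ HDf HDg)).
Qed.

Lemma Dsmooth_mult n : forall f g, Dsmooth n f -> Dsmooth n g ->
  Dsmooth n (fun x => f x * g x).
Proof.
  induction n as [|n IH]; simpl; auto. intros f g [Hf HDf] [Hg HDg].
  assert (HD : eq_pos (fun x => D f x * g x + f x * D g x) (D (fun x => f x * g x))).
  { intros x Hx. symmetry. apply D_eq, derivable_pt_lim_mult; auto. }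
  split.
  - intros x Hx. rewrite <- HD by auto. apply derivable_pt_lim_mult; auto.
  - apply (Dsmooth_ext_pos n _ _ HD), Dsmooth_plus; apply IH; auto;
      apply Dsmooth_S; simpl; auto.
Qed.

Lemma D_const c : D (fun _ => c) = fun _ => 0.
Proof. apply functional_extensionality; intro x. apply D_eq, derivable_pt_lim_const. Qed.

Lemma D_id : D (fun x => x) = fun _ => 1.
Proof. apply functional_extensionality; intro x. apply D_eq, derivable_pt_lim_id. Qed.

Lemma Dsmooth_const n c : Dsmooth n (fun _ => c).
Proof.
  revert c; induction n; simpl; auto. intro c. rewrite D_const.
  split; auto. intros; apply derivable_pt_lim_const.
Qed.

Lemma Dsmooth_id n : Dsmooth n (fun x => x).
Proof.
  destruct n; simpl; auto. rewrite D_id.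
  split; [intros; apply derivable_pt_lim_id|apply Dsmooth_const].
Qed.

(* Junk for [x <= 0]; this is why everything in part (a) is stated on (0, oo). *)
Definition rpow (a : R) : R -> R := fun x => Rpower x a.

Lemma rpow_plus a b x : rpow (a + b) x = rpow a x * rpow b x.
Proof. apply Rpower_plus. Qed.

Lemma rpow_INR n x : 0 < x -> rpow (INR n) x = x ^ n.
Proof. intros Hx. now apply Rpower_pow. Qed.

Lemma rpow_1 x : 0 < x -> rpow 1 x = x.
Proof. apply Rpower_1. Qed.

Lemma rpow_0 x : 0 < x -> rpow 0 x = 1.
Proof. apply Rpower_O. Qed.

Lemma rpow_m2 x : 0 < x -> rpow (-2) x = / x ^ 2.
Proof.
  intros Hx. unfold rpow. replace (-2) with (- INR 2) by (simpl; lra).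
  now rewrite Rpower_Ropp, Rpower_pow.
Qed.

Lemma derivable_pt_lim_rpow a x : 0 < x ->
  derivable_pt_lim (rpow a) x (a * rpow (a - 1) x).
Proof. intros Hx. now apply derivable_pt_lim_power. Qed.

Lemma Dsmooth_rpow n : forall a, Dsmooth n (rpow a).
Proof.
  induction n as [|n IH]; simpl; auto. intro a.
  assert (HD : eq_pos (fun x => a * rpow (a - 1) x) (D (rpow a))).
  { intros x Hx. symmetry. now apply D_eq, derivable_pt_lim_rpow. }
  split.
  - intros x Hx. rewrite <- HD by auto. now apply derivable_pt_lim_rpow.
  - apply (Dsmooth_ext_pos n _ _ HD), Dsmooth_mult; [apply Dsmooth_const|apply IH].
Qed.

Definition theta (a : R) (f : R -> R) : R -> R := fun x => x * D f x + a * f x.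

Lemma theta_ext_pos a f g : eq_pos f g -> eq_pos (theta a f) (theta a g).
Proof. intros H x Hx. unfold theta. now rewrite (D_eq_pos f g x Hx H), H. Qed.

Lemma Dsmooth_theta n a f : Dsmooth (S n) f -> Dsmooth n (theta a f).
Proof.
  intros Hf. apply Dsmooth_plus; apply Dsmooth_mult.
  - apply Dsmooth_id.
  - apply Hf.
  - apply Dsmooth_const.
  - now apply Dsmooth_S.
Qed.

Lemma theta_rpow_mult a k g : Dsmooth 1 g ->
  eq_pos (theta a (fun x => rpow k x * g x)) (fun x => rpow k x * theta (a + k) g x).
Proof.
  intros [Hg _] x Hx. unfold theta.
  rewrite (D_eq (fun x => rpow k x * g x) x (k * rpow (k - 1) x * g x + rpow k x * D g x)).
  2:{ apply derivable_pt_lim_mult; auto. now apply derivable_pt_lim_rpow. }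
  replace (rpow k x) with (rpow (k - 1) x * x).
  2:{ rewrite <- (rpow_1 x Hx) at 2. rewrite <- rpow_plus. f_equal; ring. }
  ring.
Qed.

Lemma D_theta b f x : 0 < x -> Dsmooth 2 f ->
  D (theta b f) x = D f x + x * D (D f) x + b * D f x.
Proof.
  intros Hx [Hf [HDf _]]. apply D_eq. unfold theta.
  replace (D f x + x * D (D f) x + b * D f x)
    with ((1 * D f x + x * D (D f) x) + (0 * f x + b * D f x)) by ring.
  apply derivable_pt_lim_plus; apply derivable_pt_lim_mult; auto.
  - apply derivable_pt_lim_id.
  - apply derivable_pt_lim_const.
Qed.

Lemma theta_comm a b f : Dsmooth 2 f -> eq_pos (theta a (theta b f)) (theta b (theta a f)).
Proof.
  intros Hf x Hx. unfold theta at 1 3.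
  rewrite !D_theta by auto. unfold theta. ring.
Qed.

Lemma xinvD_theta f : eq_pos (xinvD f) (fun x => rpow (-2) x * theta 0 f x).
Proof. intros x Hx. unfold xinvD, theta. rewrite rpow_m2 by auto. field. lra. Qed.

Lemma Bop_theta alpha f : Dsmooth 2 f ->
  eq_pos (Bop alpha f) (fun x => rpow (-2) x * theta (-2) (theta (2 * INR alpha + 2) f) x).
Proof.
  intros Hf x Hx. unfold Bop, theta at 1.
  rewrite D_theta, rpow_m2 by auto. unfold theta. field. lra.
Qed.

Lemma xinvD_ext_pos f g : eq_pos f g -> eq_pos (xinvD f) (xinvD g).
Proof. intros H x Hx. unfold xinvD. now rewrite (D_eq_pos f g x Hx H). Qed.

Lemma Bop_ext_pos alpha f g : eq_pos f g -> eq_pos (Bop alpha f) (Bop alpha g).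
Proof.
  intros H x Hx. unfold Bop.
  now rewrite (D_eq_pos f g x Hx H), (D_eq_pos (D f) (D g) x Hx (D_ext_pos f g H)), H.
Qed.

Definition thetas (l : list R) (g : R -> R) : R -> R := fold_right theta g l.

Lemma Dsmooth_thetas l : forall n g, Dsmooth (n + length l) g -> Dsmooth n (thetas l g).
Proof.
  induction l as [|a l IH]; simpl; intros n g Hg.
  - now rewrite Nat.add_0_r in Hg.
  - apply Dsmooth_theta, IH. now rewrite Nat.add_succ_comm.
Qed.

Lemma thetas_perm l l' : Permutation l l' ->
  forall g, Dsmooth (length l) g -> eq_pos (thetas l g) (thetas l' g).
Proof.
  induction 1 as [|a l l' _ IH|a b l|l l' l'' Hll' IH1 _ IH2]; intros g Hg; simpl in *.
  - apply eq_pos_refl.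
  - apply theta_ext_pos, IH, Dsmooth_S, Hg.
  - apply theta_comm, (Dsmooth_thetas l 2), Hg.
  - eapply eq_pos_trans; [now apply IH1|].
    apply IH2. now rewrite <- (Permutation_length Hll').
Qed.

Lemma rev_seq_S n : rev (seq 0 (S n)) = n :: rev (seq 0 n).
Proof. now rewrite seq_S, rev_app_distr. Qed.

Lemma map_seq_shift {A} (f : nat -> A) m n :
  map f (seq m n) = map (fun j => f (m + j)%nat) (seq 0 n).
Proof.
  revert f m; induction n as [|n IH]; intros f m; simpl; auto.
  rewrite Nat.add_0_r. f_equal. rewrite IH, (IH _ 1%nat).
  apply map_ext; intro j. f_equal; lia.
Qed.

Lemma flat_map_pair_perm {A B} (g h : A -> B) l :
  Permutation (flat_map (fun j => g j :: h j :: nil) l) (map g l ++ map h l).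
Proof.
  induction l as [|a l IH]; simpl; auto.
  apply perm_skip. eapply perm_trans; [apply perm_skip, IH|].
  apply Permutation_middle.
Qed.

Lemma iterop_xinvD_rpow_mult n : forall k g, Dsmooth n g ->
  eq_pos (iterop n xinvD (fun x => rpow k x * g x))
         (fun x => rpow (k - 2 * INR n) x
                   * thetas (map (fun j => k - 2 * INR j) (rev (seq 0 n))) g x).
Proof.
  induction n as [|n IH]; intros k g Hg x Hx.
  - simpl. do 3 f_equal. ring.
  - change (iterop (S n) xinvD ?f) with (xinvD (iterop n xinvD f)).
    rewrite (xinvD_ext_pos _ _ (IH k g (Dsmooth_S n g Hg)) x Hx), xinvD_theta by auto.
    set (l := map (fun j => k - 2 * INR j) (rev (seq 0 n))).
    rewrite (theta_rpow_mult 0 (k - 2 * INR n) (thetas l g)) by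
      (auto; apply (Dsmooth_thetas _ 1); unfold l; now rewrite length_map, length_rev, length_seq).
    rewrite <- Rmult_assoc, <- rpow_plus, S_INR, Rplus_0_l.
    unfold l; rewrite rev_seq_S. simpl.
    do 2 f_equal; ring.
Qed.

(* By [Bop_theta], the [j]-th application of [Bop] contributes the factors
   [theta (-2 j - 2)] and [theta (2 alpha + 2 - 2 j)]. *)
Definition Bop_roots (alpha m : nat) : list R :=
  flat_map (fun j => -2 * INR j - 2 :: 2 * INR alpha + 2 - 2 * INR j :: nil) (rev (seq 0 m)).

Lemma length_Bop_roots alpha m : length (Bop_roots alpha m) = (2 * m)%nat.
Proof.
  unfold Bop_roots.
  rewrite (Permutation_length (flat_map_pair_perm (fun j => -2 * INR j - 2)
             (fun j => 2 * INR alpha + 2 - 2 * INR j) _)).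
  rewrite length_app, !length_map, length_rev, length_seq. lia.
Qed.

Lemma iterop_Bop alpha m : forall y, Dsmooth (2 * m) y ->
  eq_pos (iterop m (Bop alpha) y) (fun x => rpow (-2 * INR m) x * thetas (Bop_roots alpha m) y x).
Proof.
  induction m as [|m IH]; intros y Hy x Hx.
  - simpl. rewrite Rmult_0_r, rpow_0 by auto. ring.
  - assert (Hym : Dsmooth (2 * m) y) by (apply (Dsmooth_le _ (2 * S m)); [lia|exact Hy]).
    assert (Hth : Dsmooth 2 (thetas (Bop_roots alpha m) y)).
    { apply (Dsmooth_thetas _ 2). rewrite length_Bop_roots.
      apply (Dsmooth_le _ (2 * S m)); [lia|exact Hy]. }
    change (iterop (S m) (Bop alpha) y) with (Bop alpha (iterop m (Bop alpha) y)).
    rewrite (Bop_ext_pos _ _ _ (IH y Hym) x Hx).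
    rewrite Bop_theta by (auto using Dsmooth_mult, Dsmooth_rpow).
    rewrite (theta_ext_pos _ _ _ (theta_rpow_mult _ _ _ (Dsmooth_S _ _ Hth)) x Hx).
    rewrite theta_rpow_mult by (auto using Dsmooth_theta).
    unfold Bop_roots. rewrite rev_seq_S, <- Rmult_assoc, <- rpow_plus, S_INR. simpl.
    replace (-2 + -2 * INR m) with (-2 * INR m - 2) by ring.
    replace (2 * INR alpha + 2 + -2 * INR m) with (2 * INR alpha + 2 - 2 * INR m) by ring.
    do 2 f_equal. ring.
Qed.

Lemma xinvD_roots_perm alpha :
  Permutation (map (fun j => 2 * INR alpha + 2 - 2 * INR j) (rev (seq 0 (2 * alpha + 4))))
              (Bop_roots alpha (alpha + 2)).
Proof.
  set (m := (alpha + 2)%nat).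
  eapply perm_trans; [apply Permutation_map, Permutation_sym, Permutation_rev|].
  eapply perm_trans; [|apply Permutation_sym, flat_map_pair_perm].
  eapply perm_trans; [|apply Permutation_app; apply Permutation_map, Permutation_rev].
  replace (2 * alpha + 4)%nat with (m + m)%nat by lia.
  rewrite seq_app, map_app, Nat.add_0_l, (map_seq_shift _ m m).
  erewrite (map_ext (fun j => _ - 2 * INR (m + j))); [apply Permutation_app_comm|].
  intro j. unfold m. rewrite !plus_INR. simpl. ring.
Qed.

Lemma iterop_xinvD_eq_iterop_Bop alpha (y : R -> R) : Cn_pos (2 * alpha + 4) y ->
  forall x, 0 < x ->
    x ^ 2 * iterop (2 * alpha + 4) xinvD (fun t => t ^ (2 * alpha + 2) * y t) x
    = iterop (alpha + 2) (Bop alpha) y x.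
Proof.
  intros Hy%Dsmooth_of_Cn_pos x Hx.
  assert (Hpow : eq_pos (fun t => t ^ (2 * alpha + 2) * y t)
                        (fun t => rpow (2 * INR alpha + 2) t * y t)).
  { intros t Ht. rewrite <- rpow_INR by auto. do 2 f_equal.
    rewrite plus_INR, mult_INR. simpl. ring. }
  rewrite (iterop_ext_pos _ _ _ _ xinvD_ext_pos Hpow x Hx).
  rewrite iterop_xinvD_rpow_mult by auto.
  rewrite iterop_Bop by (auto; now replace (2 * (alpha + 2))%nat with (2 * alpha + 4)%nat by lia).
  rewrite (thetas_perm _ _ (xinvD_roots_perm alpha)) by
    (auto; now rewrite length_map, length_rev, length_seq).
  rewrite <- (rpow_INR 2) by auto.
  rewrite <- Rmult_assoc, <- rpow_plus. do 2 f_equal.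
  rewrite !plus_INR, !mult_INR. simpl. ring.
Qed.

(** * Even power series *)

Definition evenPS (a : nat -> R) (x : R) : R := PSeries a (x ^ 2).

Definition entire (a : nat -> R) : Prop := CV_radius a = p_infty.

Lemma ex_pseries_entire a x : entire a -> ex_pseries a x.
Proof. intros H. apply CV_radius_inside. now rewrite H. Qed.

Lemma entire_ext a b : (forall n, a n = b n) -> entire a -> entire b.
Proof. unfold entire. intros H. now rewrite (CV_radius_ext a b H). Qed.

Lemma entire_le a b : (forall n, Rabs (a n) <= Rabs (b n)) -> entire b -> entire a.
Proof.
  unfold entire; intros Hab Hb.
  destruct (CV_radius_bounded a) as [Ha _]. destruct (CV_radius_bounded b) as [_ Hb'].
  assert (Hle : Rbar_le (CV_radius b) (CV_radius a)).
  { apply Hb'. intros r [M HM]. apply Ha. exists M. intros n.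
    eapply Rle_trans; [|apply HM].
    rewrite !Rabs_mult. apply Rmult_le_compat_r; [apply Rabs_pos|apply Hab]. }
  rewrite Hb in Hle. destruct (CV_radius a); simpl in Hle; tauto.
Qed.

Lemma entire_exp K : 0 < K -> entire (fun n => K ^ n / INR (fact n)).
Proof.
  intros HK. apply CV_radius_infinite_DAlembert.
  - intro n. apply Rmult_integral_contrapositive; split.
    + apply pow_nonzero; lra.
    + apply Rinv_neq_0_compat, INR_fact_neq_0.
  - apply is_lim_seq_ext with (u := fun n => K * / INR (S n)).
    + intro n. rewrite fact_simpl, mult_INR. simpl pow.
      pose proof (INR_fact_lt_0 n). pose proof (lt_0_INR (S n) ltac:(lia)).
      assert (K ^ n <> 0) by (apply pow_nonzero; lra).
      rewrite Rabs_pos_eq.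
      * field. lra.
      * apply Rlt_le. replace (K * K ^ n / (INR (S n) * INR (fact n)) / (K ^ n / INR (fact n)))
          with (K / INR (S n)) by (field; lra).
        apply Rdiv_lt_0_compat; lra.
    + replace (Finite 0) with (Rbar_mult K (Rbar_inv p_infty)) by (simpl; f_equal; ring).
      apply is_lim_seq_scal_l, is_lim_seq_inv; [|discriminate].
      apply (is_lim_seq_incr_1 INR), is_lim_seq_INR.
Qed.

Lemma entire_scal c a : entire a -> entire (fun n => c * a n).
Proof.
  intros H. apply (entire_le _ (PS_scal (Rabs c + 1) a)).
  - intro n. unfold PS_scal, scal; simpl; unfold mult; simpl.
    rewrite !Rabs_mult, (Rabs_pos_eq (Rabs c + 1)) by (pose proof (Rabs_pos c); lra).
    apply Rmult_le_compat_r; [apply Rabs_pos|lra].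
  - unfold entire. rewrite CV_radius_scal; auto. pose proof (Rabs_pos c); lra.
Qed.

Lemma entire_plus a b : entire a -> entire b -> entire (fun n => a n + b n).
Proof.
  unfold entire; intros Ha Hb. pose proof (CV_radius_plus a b) as H.
  rewrite Ha, Hb in H. change (CV_radius (PS_plus a b) = p_infty).
  destruct (CV_radius (PS_plus a b)); simpl in H; tauto.
Qed.

Lemma entire_incr a : entire a -> entire (PS_incr_1 a).
Proof. unfold entire; intros; now rewrite CV_radius_incr_1. Qed.

Lemma entire_incr_n p a : entire a -> entire (Nat.iter p PS_incr_1 a).
Proof. intros; induction p; simpl; auto using entire_incr. Qed.

Lemma entire_derive a : entire a -> entire (PS_derive a).
Proof. unfold entire; intros; now rewrite CV_radius_derive. Qed.

Lemma evenPS_ext a b x : (forall n, a n = b n) -> evenPS a x = evenPS b x.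
Proof. apply PSeries_ext. Qed.

Lemma evenPS_plus a b x : entire a -> entire b ->
  evenPS (fun n => a n + b n) x = evenPS a x + evenPS b x.
Proof. intros. apply (PSeries_plus a b); now apply ex_pseries_entire. Qed.

Lemma evenPS_scal c a x : evenPS (fun n => c * a n) x = c * evenPS a x.
Proof. apply (PSeries_scal c a). Qed.

Lemma evenPS_incr a x : evenPS (PS_incr_1 a) x = x ^ 2 * evenPS a x.
Proof. apply PSeries_incr_1. Qed.

Lemma evenPS_incr_n p a x : evenPS (Nat.iter p PS_incr_1 a) x = x ^ (2 * p) * evenPS a x.
Proof.
  induction p as [|p IH]; [simpl; ring|].
  change (Nat.iter (S p) PS_incr_1 a) with (PS_incr_1 (Nat.iter p PS_incr_1 a)).
  rewrite evenPS_incr, IH, <- Rmult_assoc, <- pow_add. do 2 f_equal. lia.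
Qed.

Lemma evenPS_zero a x : (forall n, a n = 0) -> evenPS a x = 0.
Proof.
  intros H. rewrite (evenPS_ext a (fun n => 0 * a n)) by (intro n; rewrite H; ring).
  rewrite evenPS_scal. ring.
Qed.

Lemma derivable_pt_lim_evenPS a x : entire a ->
  derivable_pt_lim (evenPS a) x (2 * x * evenPS (PS_derive a) x).
Proof.
  intros H. replace (2 * x * evenPS (PS_derive a) x)
    with (PSeries (PS_derive a) (x ^ 2) * (INR 2 * x ^ Nat.pred 2)) by (unfold evenPS; simpl; ring).
  apply (derivable_pt_lim_comp (fun x => x ^ 2) (PSeries a)).
  - apply derivable_pt_lim_pow.
  - apply is_derive_Reals, is_derive_PSeries. now rewrite H.
Qed.

Lemma D_evenPS a : entire a -> D (evenPS a) = fun x => 2 * x * evenPS (PS_derive a) x.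
Proof.
  intros H. apply functional_extensionality; intro x.
  now apply D_eq, derivable_pt_lim_evenPS.
Qed.

Lemma PS_incr_1_0 (a : nat -> R) : PS_incr_1 a 0 = 0.
Proof. reflexivity. Qed.

Lemma PS_incr_1_S (a : nat -> R) n : PS_incr_1 a (S n) = a n.
Proof. reflexivity. Qed.

Lemma incr_n_at p (a : nat -> R) i : Nat.iter p PS_incr_1 a (i + p)%nat = a i.
Proof.
  induction p as [|p IH]; simpl.
  - now rewrite Nat.add_0_r.
  - now rewrite <- Nat.add_succ_comm.
Qed.

Lemma INR_fact_S n : INR (fact (S n)) = (INR n + 1) * INR (fact n).
Proof. rewrite fact_simpl, mult_INR, S_INR. ring. Qed.

(* [x^(-1) D] acts on even power series as [a |-> 2 PS_derive a]. *)
Definition xinvD_coef (n : nat) (a : nat -> R) (i : nat) : R :=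
  2 ^ n * INR (fact (i + n)) / INR (fact i) * a (i + n)%nat.

Lemma xinvD_coef_0 a i : xinvD_coef 0 a i = a i.
Proof.
  unfold xinvD_coef. rewrite Nat.add_0_r. field. apply INR_fact_neq_0.
Qed.

Lemma xinvD_coef_S n a i : xinvD_coef (S n) a i = 2 * PS_derive (xinvD_coef n a) i.
Proof.
  unfold xinvD_coef, PS_derive.
  rewrite <- Nat.add_succ_comm, INR_fact_S, S_INR. simpl pow.
  pose proof (INR_fact_neq_0 i). pose proof (pos_INR i).
  field. lra.
Qed.

Lemma entire_xinvD_coef n a : entire a -> entire (xinvD_coef n a).
Proof.
  intros Ha. induction n as [|n IH].
  - apply (entire_ext a); auto. intro i. now rewrite xinvD_coef_0.
  - apply (entire_ext (fun i => 2 * PS_derive (xinvD_coef n a) i)).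
    + intro i. now rewrite xinvD_coef_S.
    + now apply entire_scal, entire_derive.
Qed.

Lemma iterop_xinvD_evenPS n a : entire a ->
  eq_pos (iterop n xinvD (evenPS a)) (evenPS (xinvD_coef n a)).
Proof.
  intros Ha. induction n as [|n IH]; intros x Hx.
  - apply evenPS_ext. intro i. now rewrite xinvD_coef_0.
  - change (iterop (S n) xinvD (evenPS a)) with (xinvD (iterop n xinvD (evenPS a))).
    rewrite (xinvD_ext_pos _ _ IH x Hx). unfold xinvD.
    rewrite D_evenPS by now apply entire_xinvD_coef.
    rewrite (evenPS_ext _ _ _ (xinvD_coef_S n a)), evenPS_scal.
    field. lra.
Qed.

Definition L2_coef (alpha : nat) (a : nat -> R) (n : nat) : R :=
  4 * (INR n + 1) * (INR n + INR alpha + 1) * a (S n).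

Lemma L2_coef_decomp alpha a n : L2_coef alpha a n =
  (4 * INR alpha + 4) * PS_derive a n + 4 * PS_incr_1 (PS_derive (PS_derive a)) n.
Proof.
  unfold L2_coef, PS_derive. destruct n as [|n].
  - rewrite PS_incr_1_0. simpl. ring.
  - rewrite PS_incr_1_S, !S_INR. ring.
Qed.

Lemma entire_L2_coef alpha a : entire a -> entire (L2_coef alpha a).
Proof.
  intros Ha. eapply entire_ext; [intro n; symmetry; apply L2_coef_decomp|].
  apply entire_plus; apply entire_scal; auto using entire_incr, entire_derive.
Qed.

Lemma L2_evenPS alpha a x : 0 < x -> entire a ->
  L2 alpha (evenPS a) x = evenPS (L2_coef alpha a) x.
Proof.
  intros Hx Ha. unfold L2. rewrite D_evenPS by auto.
  erewrite D_mult; [|apply derivable_pt_lim_pow|].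
  2:{ apply derivable_pt_lim_mult; [apply derivable_pt_lim_mult|].
      - apply derivable_pt_lim_const.
      - apply derivable_pt_lim_id.
      - now apply derivable_pt_lim_evenPS, entire_derive. }
  rewrite (evenPS_ext _ _ _ (L2_coef_decomp alpha a)).
  rewrite evenPS_plus by auto using entire_scal, entire_incr, entire_derive.
  rewrite !evenPS_scal, evenPS_incr.
  replace (Nat.pred (2 * alpha + 1)) with (2 * alpha)%nat by lia.
  rewrite pow_add, plus_INR, mult_INR. simpl INR.
  assert (x ^ (2 * alpha) <> 0) by (apply pow_nonzero; lra).
  field. split; auto; lra.
Qed.

Definition L2a4_coef (alpha : nat) (a : nat -> R) : nat -> R :=
  PS_incr_1 (fun i => (-1) ^ (alpha + 1) * 2 ^ (2 * alpha + 4)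
                      * INR (fact (i + (2 * alpha + 4))) / INR (fact i) * a (i + alpha + 3)%nat).

Lemma L2a4_coef_xinvD alpha a n : L2a4_coef alpha a n =
  PS_incr_1 (fun i => (-1) ^ (alpha + 1)
                      * xinvD_coef (2 * alpha + 4) (Nat.iter (alpha + 1) PS_incr_1 a) i) n.
Proof.
  destruct n as [|i]; [reflexivity|].
  unfold L2a4_coef, xinvD_coef. rewrite !PS_incr_1_S.
  replace (i + (2 * alpha + 4))%nat with ((i + alpha + 3) + (alpha + 1))%nat at 3 by lia.
  rewrite incr_n_at. unfold Rdiv. ring.
Qed.

Lemma entire_L2a4_coef alpha a : entire a -> entire (L2a4_coef alpha a).
Proof.
  intros Ha. eapply entire_ext; [intro n; symmetry; apply L2a4_coef_xinvD|].
  apply entire_incr, entire_scal, entire_xinvD_coef, entire_incr_n, Ha.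
Qed.

Lemma L2a4_evenPS alpha a x : 0 < x -> entire a ->
  L2a4 alpha (evenPS a) x = evenPS (L2a4_coef alpha a) x.
Proof.
  intros Hx Ha. unfold L2a4.
  assert (Hpow : (fun t => t ^ (2 * alpha + 2) * evenPS a t)
                 = evenPS (Nat.iter (alpha + 1) PS_incr_1 a)).
  { apply functional_extensionality; intro t.
    rewrite evenPS_incr_n. do 2 f_equal. lia. }
  rewrite Hpow, iterop_xinvD_evenPS by auto using entire_incr_n.
  rewrite (evenPS_ext _ _ _ (L2a4_coef_xinvD alpha a)), evenPS_incr, evenPS_scal. ring.
Qed.

(** * Bessel-type coefficients *)

Definition bessel_coef (g lambda : R) (k : nat) : R :=
  (-1) ^ k * (lambda / 2) ^ (2 * k) / (INR (fact k) * poch (g + 1) k).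

Lemma poch_ge_1 g k : 0 <= g -> 1 <= poch (g + 1) k.
Proof.
  intros Hg. induction k as [|k IH]; simpl; [lra|].
  pose proof (pos_INR k). apply Rle_trans with (1 * 1); [lra|].
  apply Rmult_le_compat; lra.
Qed.

Lemma entire_bessel_coef g lambda : 0 <= g -> entire (bessel_coef g lambda).
Proof.
  intros Hg. set (q := (lambda / 2) ^ 2). assert (Hq : 0 <= q) by apply pow2_ge_0.
  apply (entire_le _ (fun n => (q + 1) ^ n / INR (fact n))); [|apply entire_exp; lra].
  intro n. set (F := INR (fact n)). set (P := poch (g + 1) n).
  assert (HF : 0 < F) by apply INR_fact_lt_0.
  assert (HP : 1 <= P) by now apply poch_ge_1.
  assert (Hqn : 0 <= q ^ n <= (q + 1) ^ n) by (split; [apply pow_le|apply pow_incr]; lra).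
  assert (Hb : bessel_coef g lambda n = (-1) ^ n * (q ^ n / (F * P))).
  { unfold bessel_coef. fold F P. rewrite pow_mult. fold q. field. lra. }
  rewrite Hb, Rabs_mult, pow_1_abs, Rmult_1_l.
  rewrite !Rabs_pos_eq by (apply Rmult_le_pos; [|apply Rlt_le, Rinv_0_lt_compat]; nra).
  replace ((q + 1) ^ n / F) with ((q + 1) ^ n * P / (F * P)) by (field; lra).
  apply Rmult_le_compat_r; [apply Rlt_le, Rinv_0_lt_compat|]; nra.
Qed.

Lemma Jn_evenPS g lambda : 0 <= g -> Jn g lambda = evenPS (bessel_coef g lambda).
Proof.
  intros Hg. apply functional_extensionality; intro x. unfold Jn, Rlim.
  set (u := fun N => sum_f_R0 _ N).
  assert (Hu : Un_cv u (evenPS (bessel_coef g lambda) x)).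
  { apply is_lim_seq_Reals.
    assert (Hs : ex_series (fun k => bessel_coef g lambda k * (x ^ 2) ^ k)).
    { eapply ex_series_ext;
        [|apply (ex_pseries_entire _ (x ^ 2) (entire_bessel_coef g lambda Hg))].
      intro n. simpl. rewrite pow_n_pow. unfold scal; simpl; unfold mult; simpl. ring. }
    eapply is_lim_seq_ext; [|exact (Series_correct _ Hs)].
    intro n. rewrite sum_n_Reals. apply sum_eq. intros k _.
    unfold bessel_coef. rewrite <- pow_mult.
    replace (lambda * x / 2) with (lambda / 2 * x) by field.
    rewrite Rpow_mult_distr. unfold Rdiv. ring. }
  apply (UL_sequence u); [|exact Hu].
  exact (epsilon_spec (inhabits 0) (fun l => Un_cv u l) (ex_intro _ _ Hu)).
Qed.

Lemma poch_pos g k : 0 <= g -> 0 < poch (g + 1) k.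
Proof. intros Hg. pose proof (poch_ge_1 g k Hg). lra. Qed.

Lemma bessel_coef_0 g lambda : bessel_coef g lambda 0 = 1.
Proof. unfold bessel_coef. simpl. field. Qed.

Lemma bessel_coef_rec g lambda n : 0 <= g ->
  4 * (INR n + 1) * (INR n + g + 1) * bessel_coef g lambda (S n)
  + lambda ^ 2 * bessel_coef g lambda n = 0.
Proof.
  intros Hg. unfold bessel_coef. simpl poch.
  replace (2 * S n)%nat with (2 * n + 2)%nat by lia.
  rewrite pow_add, INR_fact_S. simpl pow.
  pose proof (INR_fact_neq_0 n). pose proof (poch_pos g n Hg). pose proof (pos_INR n).
  field. repeat split; lra.
Qed.

Lemma poch_fact a k : poch (INR a + 1) k * INR (fact a) = INR (fact (k + a)).
Proof.
  induction k as [|k IH]; simpl poch; [simpl; ring|].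
  rewrite Nat.add_succ_l, INR_fact_S, <- IH, plus_INR. ring.
Qed.

Lemma bessel_coef_nat a lambda n : bessel_coef (INR a) lambda n =
  (-1) ^ n * ((lambda / 2) ^ 2) ^ n * INR (fact a) / (INR (fact n) * INR (fact (n + a))).
Proof.
  unfold bessel_coef. rewrite <- poch_fact, pow_mult.
  pose proof (poch_pos (INR a) n (pos_INR a)).
  pose proof (INR_fact_neq_0 n). pose proof (INR_fact_neq_0 a).
  field. repeat split; auto; lra.
Qed.

Definition K_coef (alpha : nat) (lambda : R) : nat -> R :=
  PS_incr_1 (fun n => - kcoef alpha lambda * bessel_coef (INR alpha + 2) lambda n).

Lemma entire_K_coef alpha lambda : entire (K_coef alpha lambda).
Proof.
  apply entire_incr, entire_scal, entire_bessel_coef. pose proof (pos_INR alpha). lra.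
Qed.

Lemma Kfun_evenPS alpha lambda : Kfun alpha lambda = evenPS (K_coef alpha lambda).
Proof.
  apply functional_extensionality; intro x. unfold Kfun, K_coef.
  rewrite Jn_evenPS by (pose proof (pos_INR alpha); lra).
  rewrite evenPS_incr, evenPS_scal. ring.
Qed.

Lemma pow_2n_half l n : l ^ (2 * n) = 4 ^ n * ((l / 2) ^ 2) ^ n.
Proof. rewrite pow_mult, <- Rpow_mult_distr. f_equal. field. Qed.

Lemma kcoef_half_sq alpha lambda : kcoef alpha lambda =
  ((lambda / 2) ^ 2) ^ (alpha + 2) / ((INR alpha + 1) * INR (fact (alpha + 2))).
Proof.
  unfold kcoef. replace (2 * alpha + 4)%nat with (2 * (alpha + 2))%nat by lia.
  now rewrite pow_mult.
Qed.

Lemma neg1_pow_cases n : (-1) ^ n = 1 \/ (-1) ^ n = -1.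
Proof.
  destruct (Nat.Even_or_Odd n) as [[k ->]|[k ->]].
  - left. apply pow_1_even.
  - right. rewrite Nat.add_1_r. apply pow_1_odd.
Qed.

Definition L2_plus_coef (alpha : nat) (lambda : R) (a : nat -> R) (n : nat) : R :=
  L2_coef alpha a n + lambda ^ 2 * a n.

Definition L2a4_plus_coef (alpha : nat) (lambda : R) (a : nat -> R) (n : nat) : R :=
  L2a4_coef alpha a n + lambda ^ (2 * alpha + 4) * a n.

Lemma entire_L2_plus_coef alpha lambda a : entire a -> entire (L2_plus_coef alpha lambda a).
Proof. intros. apply entire_plus; auto using entire_L2_coef, entire_scal. Qed.

Lemma entire_L2a4_plus_coef alpha lambda a : entire a -> entire (L2a4_plus_coef alpha lambda a).
Proof. intros. apply entire_plus; auto using entire_L2a4_coef, entire_scal. Qed.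

Lemma L2_plus_evenPS alpha lambda a x : 0 < x -> entire a ->
  L2 alpha (evenPS a) x + lambda ^ 2 * evenPS a x = evenPS (L2_plus_coef alpha lambda a) x.
Proof.
  intros Hx Ha. unfold L2_plus_coef.
  now rewrite evenPS_plus, evenPS_scal, L2_evenPS by auto using entire_L2_coef, entire_scal.
Qed.

Lemma L2a4_plus_evenPS alpha lambda a x : 0 < x -> entire a ->
  L2a4 alpha (evenPS a) x + lambda ^ (2 * alpha + 4) * evenPS a x
  = evenPS (L2a4_plus_coef alpha lambda a) x.
Proof.
  intros Hx Ha. unfold L2a4_plus_coef.
  now rewrite evenPS_plus, evenPS_scal, L2a4_evenPS by auto using entire_L2a4_coef, entire_scal.
Qed.

Lemma L2_plus_coef_lin alpha lambda M a b n :
  L2_plus_coef alpha lambda (fun k => a k + M * b k) n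
  = L2_plus_coef alpha lambda a n + M * L2_plus_coef alpha lambda b n.
Proof. unfold L2_plus_coef, L2_coef. ring. Qed.

Lemma L2a4_plus_coef_lin alpha lambda M a b n :
  L2a4_plus_coef alpha lambda (fun k => a k + M * b k) n
  = L2a4_plus_coef alpha lambda a n + M * L2a4_plus_coef alpha lambda b n.
Proof.
  unfold L2a4_plus_coef, L2a4_coef.
  destruct n; [rewrite !PS_incr_1_0|rewrite !PS_incr_1_S]; ring.
Qed.

Lemma bessel_coef_equation alpha lambda n :
  L2_plus_coef alpha lambda (bessel_coef (INR alpha) lambda) n = 0.
Proof. apply bessel_coef_rec, pos_INR. Qed.

Lemma K_coef_equation alpha lambda n :
  L2a4_plus_coef alpha lambda (K_coef alpha lambda) n = 0.
Proof.
  unfold L2a4_plus_coef, L2a4_coef, K_coef. destruct n as [|i]; [rewrite !PS_incr_1_0; ring|].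
  rewrite !PS_incr_1_S.
  replace (i + alpha + 3)%nat with (S (i + (alpha + 2))) by lia.
  rewrite PS_incr_1_S.
  replace (INR alpha + 2) with (INR (alpha + 2)) by (rewrite plus_INR; simpl; ring).
  rewrite !bessel_coef_nat, kcoef_half_sq.
  replace (i + (alpha + 2) + (alpha + 2))%nat with (i + (2 * alpha + 4))%nat by lia.
  replace (2 * alpha + 4)%nat with (2 * (alpha + 2))%nat by lia.
  rewrite pow_2n_half, (pow_2n_half lambda).
  replace (2 / 2) with 1 by field. rewrite pow1, pow1, Rmult_1_r.
  set (q := (lambda / 2) ^ 2).
  rewrite !pow_add.
  pose proof (INR_fact_neq_0 i). pose proof (INR_fact_neq_0 (i + (alpha + 2))).
  pose proof (INR_fact_neq_0 (i + 2 * (alpha + 2))). pose proof (INR_fact_neq_0 (alpha + 2)).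
  pose proof (pos_INR alpha).
  destruct (neg1_pow_cases alpha) as [Hs|Hs]; rewrite Hs; field; repeat split; auto; lra.
Qed.

Lemma L2_plus_K_coef_S alpha lambda i :
  L2_plus_coef alpha lambda (K_coef alpha lambda) (S i)
  = - 4 * (INR alpha + 1) * kcoef alpha lambda * bessel_coef (INR alpha + 2) lambda (S i).
Proof.
  unfold L2_plus_coef, L2_coef, K_coef. rewrite !PS_incr_1_S.
  pose proof (bessel_coef_rec (INR alpha + 2) lambda i) as Hrec.
  pose proof (pos_INR alpha).
  set (b := bessel_coef (INR alpha + 2) lambda) in *.
  replace (lambda ^ 2 * (- kcoef alpha lambda * b i))
    with (- kcoef alpha lambda * (lambda ^ 2 * b i)) by ring.
  replace (lambda ^ 2 * b i) with (- (4 * (INR i + 1) * (INR i + (INR alpha + 2) + 1) * b (S i)))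
    by lra.
  rewrite S_INR. ring.
Qed.

Lemma coupling_coef_0 alpha lambda :
  L2_plus_coef alpha lambda (K_coef alpha lambda) 0
  + / (2 ^ (2 * alpha + 2) * INR (fact (alpha + 2)))
    * L2a4_plus_coef alpha lambda (bessel_coef (INR alpha) lambda) 0 = 0.
Proof.
  pose proof (pos_INR alpha). pose proof (INR_fact_neq_0 (alpha + 2)).
  unfold L2_plus_coef, L2a4_plus_coef, L2_coef, L2a4_coef, K_coef.
  rewrite !PS_incr_1_S, !PS_incr_1_0, !bessel_coef_0, kcoef_half_sq.
  replace (2 * alpha + 4)%nat with (2 * (alpha + 2))%nat by lia.
  replace (2 * alpha + 2)%nat with (2 * (alpha + 1))%nat by lia.
  rewrite !pow_2n_half. replace (2 / 2) with 1 by field. rewrite !pow1, !Rmult_1_r.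
  replace (4 ^ (alpha + 2)) with (4 ^ (alpha + 1) * 4) by (rewrite !pow_add; simpl; ring).
  change (INR 0) with 0.
  assert (4 ^ (alpha + 1) <> 0) by (apply pow_nonzero; lra).
  field. lra.
Qed.

Lemma coupling_coef_S alpha lambda i :
  L2_plus_coef alpha lambda (K_coef alpha lambda) (S i)
  + / (2 ^ (2 * alpha + 2) * INR (fact (alpha + 2)))
    * L2a4_plus_coef alpha lambda (bessel_coef (INR alpha) lambda) (S i) = 0.
Proof.
  pose proof (pos_INR alpha). pose proof (INR_fact_neq_0 (alpha + 2)).
  rewrite L2_plus_K_coef_S. unfold L2a4_plus_coef, L2a4_coef. rewrite PS_incr_1_S.
  replace (INR alpha + 2) with (INR (alpha + 2)) by (rewrite plus_INR; simpl; ring).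
  rewrite !bessel_coef_nat, kcoef_half_sq.
  replace (2 * alpha + 4)%nat with (2 * (alpha + 2))%nat by lia.
  replace (2 * alpha + 2)%nat with (2 * (alpha + 1))%nat by lia.
  rewrite !pow_2n_half. replace (2 / 2) with 1 by field. rewrite !pow1, !Rmult_1_r.
  set (q := (lambda / 2) ^ 2).
  replace (fact (S i + (alpha + 2))) with (fact (S (S (i + alpha + 1)))) by (f_equal; lia).
  replace (fact (i + alpha + 3)) with (fact (S (S (i + alpha + 1)))) by (f_equal; lia).
  replace (fact (i + alpha + 3 + alpha)) with (fact (i + 2 * alpha + 3)) by (f_equal; lia).
  replace (fact (i + 2 * (alpha + 2))) with (fact (S (i + 2 * alpha + 3))) by (f_equal; lia).
  replace (fact (S i + alpha)) with (fact (i + alpha + 1)) by (f_equal; lia).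
  replace (fact (alpha + 2)) with (fact (S (S alpha))) by (f_equal; lia).
  rewrite !INR_fact_S, !S_INR, !pow_add, <- !tech_pow_Rmult.
  rewrite !plus_INR, !mult_INR. change (INR 1) with 1.
  replace (INR 2) with 2 by (simpl; ring). replace (INR 3) with 3 by (simpl; ring).
  pose proof (INR_fact_neq_0 i). pose proof (INR_fact_neq_0 alpha). pose proof (pos_INR i).
  pose proof (INR_fact_neq_0 (i + alpha + 1)). pose proof (INR_fact_neq_0 (i + 2 * alpha + 3)).
  assert (4 ^ alpha <> 0) by (apply pow_nonzero; lra).
  destruct (neg1_pow_cases alpha) as [Hs|Hs]; rewrite Hs; field; repeat split; auto; lra.
Qed.

Lemma K_equation alpha lambda x : 0 < x ->
  L2a4 alpha (Kfun alpha lambda) x + lambda ^ (2 * alpha + 4) * Kfun alpha lambda x = 0.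
Proof.
  intros Hx. rewrite Kfun_evenPS, L2a4_plus_evenPS by auto using entire_K_coef.
  apply evenPS_zero, K_coef_equation.
Qed.

Definition JM_coef (alpha : nat) (M lambda : R) (n : nat) : R :=
  bessel_coef (INR alpha) lambda n + M * K_coef alpha lambda n.

Lemma entire_JM_coef alpha M lambda : entire (JM_coef alpha M lambda).
Proof.
  apply entire_plus; [apply entire_bessel_coef, pos_INR|apply entire_scal, entire_K_coef].
Qed.

Lemma JM_evenPS alpha M lambda : JM alpha M lambda = evenPS (JM_coef alpha M lambda).
Proof.
  apply functional_extensionality; intro x. unfold JM, JM_coef.
  rewrite Jn_evenPS, Kfun_evenPS, evenPS_plus, evenPS_scal by
    auto using pos_INR, entire_scal, entire_K_coef, entire_bessel_coef.
  reflexivity.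
Qed.

Lemma coupling_coef alpha lambda n :
  L2_plus_coef alpha lambda (K_coef alpha lambda) n
  + / (2 ^ (2 * alpha + 2) * INR (fact (alpha + 2)))
    * L2a4_plus_coef alpha lambda (bessel_coef (INR alpha) lambda) n = 0.
Proof. destruct n; [apply coupling_coef_0|apply coupling_coef_S]. Qed.

Lemma JM_coef_equation alpha M lambda n :
  L2_plus_coef alpha lambda (JM_coef alpha M lambda) n
  + M / (2 ^ (2 * alpha + 2) * INR (fact (alpha + 2)))
    * L2a4_plus_coef alpha lambda (JM_coef alpha M lambda) n = 0.
Proof.
  unfold JM_coef. rewrite L2_plus_coef_lin, L2a4_plus_coef_lin.
  rewrite bessel_coef_equation, K_coef_equation.
  transitivity (M * (L2_plus_coef alpha lambda (K_coef alpha lambda) n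
                     + / (2 ^ (2 * alpha + 2) * INR (fact (alpha + 2)))
                       * L2a4_plus_coef alpha lambda (bessel_coef (INR alpha) lambda) n)).
  - unfold Rdiv. ring.
  - rewrite coupling_coef. ring.
Qed.

Lemma JM_equation alpha M lambda x : 0 < x ->
  (L2 alpha (JM alpha M lambda) x + lambda ^ 2 * JM alpha M lambda x)
  + M / (2 ^ (2 * alpha + 2) * INR (fact (alpha + 2))) *
    (L2a4 alpha (JM alpha M lambda) x + lambda ^ (2 * alpha + 4) * JM alpha M lambda x) = 0.
Proof.
  intros Hx. pose proof (entire_JM_coef alpha M lambda).
  rewrite JM_evenPS, L2_plus_evenPS, L2a4_plus_evenPS, <- evenPS_scal, <- evenPS_plus
    by auto using entire_scal, entire_L2_plus_coef, entire_L2a4_plus_coef.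
  apply evenPS_zero, JM_coef_equation.
Qed.

Theorem theorem5p1 (alpha : nat) (M : R) (HM : 0 <= M) :
  (* (a) *)
  (forall (y : R -> R), Cn_pos (2 * alpha + 4) y ->
     forall x, 0 < x ->
       x ^ 2 * iterop (2 * alpha + 4) xinvD (fun t => t ^ (2 * alpha + 2) * y t) x
       = iterop (alpha + 2) (Bop alpha) y x) /\
  (* (b) *)
  (forall lambda, 0 <= lambda -> forall x, 0 < x ->
     (L2 alpha (JM alpha M lambda) x + lambda ^ 2 * JM alpha M lambda x)
     + M / (2 ^ (2 * alpha + 2) * INR (fact (alpha + 2))) *
       (L2a4 alpha (JM alpha M lambda) x + lambda ^ (2 * alpha + 4) * JM alpha M lambda x)
     = 0) /\
  (* (c) *)
  (forall lambda, 0 <= lambda -> forall x, 0 < x ->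
     L2a4 alpha (Kfun alpha lambda) x + lambda ^ (2 * alpha + 4) * Kfun alpha lambda x = 0).
Proof.
  split; [|split].
  - exact (iterop_xinvD_eq_iterop_Bop alpha).
  - intros lambda _. exact (JM_equation alpha M lambda).
  - intros lambda _. exact (K_equation alpha lambda).
Qed.
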